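(* Let $\mathbb C$ be a homological category with finite colimits, and let $x\colon X\to A$, $y\colon Y\to A$ be morphisms whose images are normal monomorphisms. If $m$ is an internal multiplication $X\times Y\to A$ over $(A,1_A)$ and $p\colon A_3\to A$ is a morphism with $p\gamma_1=m$, then $p$ is an internal pregroupoid structure on the span $A/X\leftarrow A\to A/Y$.
   Context: A homological category is a regular pointed category in which the Split Short Five Lemma holds; images are taken in the (regular epi, mono) factorization; a normal monomorphism is a kernel of some morphism. Notation: $\iota_i$ coproduct injections, $[a,b]$ copairing, $\langle\cdot\rangle$ pairing. $(A+X)\times_A(A+Y)$ is the pullback of $[1,0]\colon A+X\to A$ and $[1,0]\colon A+Y\to A$, with projections $\pi_1,\pi_2$. An internal multiplication $X\times Y\to A$ over $(A,1_A)$ is a morphism $m\colon (A+X)\times_A(A+Y)\to A$ with $m\langle 1,\iota_1[1,0]\rangle=[1,x]$ and $m\langle\iota_1[1,0],1\rangle=[1,y]$. $A_3=A\times_{A/X}A\times_{A/Y}A$ is the limit of $A\xrightarrow{\mathsf{coker}(x)}A/X\xleftarrow{\mathsf{coker}(x)}A\xrightarrow{\mathsf{coker}(y)}A/Y\xleftarrow{\mathsf{coker}(y)}A$, and $\gamma_1=\langle [1,x]\pi_1,[1,0]\pi_1,[1,y]\pi_2\rangle$. An internal pregroupoid structure on the span $A/X\leftarrow A\to A/Y$ is a morphism $p\colon A_3\to A$ with $p\langle\pi_1,\pi_2,\pi_2\rangle=\pi_1$ on $A\times_{A/X}A$ and $p\langle\pi_1,\pi_1,\pi_2\rangle=\pi_2$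 on $A\times_{A/Y}A$ ($\pi_1,\pi_2$ the kernel-pair projections). *)

Set Implicit Arguments.
Unset Strict Implicit.

Record Category : Type := {
  Ob :> Type;
  Hom : Ob -> Ob -> Type;
  idm : forall A, Hom A A;
  comp : forall A B D, Hom B D -> Hom A B -> Hom A D;
  comp_id_l : forall A B (f : Hom A B), comp (idm B) f = f;
  comp_id_r : forall A B (f : Hom A B), comp f (idm A) = f;
  comp_assoc : forall A B D E (h : Hom D E) (g : Hom B D) (f : Hom A B),
      comp h (comp g f) = comp (comp h g) f
}.
Arguments Hom {c} _ _.
Arguments idm {c} A.
Arguments comp {c A B D} _ _.

Notation "g ∘ f" := (comp g f) (at level 40, left associativity).

Definition is_initial {C : Category} (I : C) : Prop :=
  forall B : C, exists f : Hom I B, forall g : Hom I B, g = f.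
Definition is_terminal {C : Category} (T : C) : Prop :=
  forall B : C, exists f : Hom B T, forall g : Hom B T, g = f.
Definition is_zero_object {C : Category} (Z : C) : Prop :=
  is_initial Z /\ is_terminal Z.

Definition is_zero {C : Category} {A B : C} (f : Hom A B) : Prop :=
  exists (Z : C) (a : Hom A Z) (b : Hom Z B), is_zero_object Z /\ f = b ∘ a.

Definition is_mono {C : Category} {A B : C} (f : Hom A B) : Prop :=
  forall (Z : C) (g h : Hom Z A), f ∘ g = f ∘ h -> g = h.
Definition is_iso {C : Category} {A B : C} (f : Hom A B) : Prop :=
  exists g : Hom B A, g ∘ f = idm A /\ f ∘ g = idm B.

Definition is_pullback {C : Category} {A B D P : C}
  (f : Hom A D) (g : Hom B D) (p1 : Hom P A) (p2 : Hom P B) : Prop :=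
  f ∘ p1 = g ∘ p2 /\
  forall (Z : C) (z1 : Hom Z A) (z2 : Hom Z B), f ∘ z1 = g ∘ z2 ->
    exists! u : Hom Z P, p1 ∘ u = z1 /\ p2 ∘ u = z2.

Definition is_kernel_pair {C : Category} {A B K : C}
  (f : Hom A B) (k1 k2 : Hom K A) : Prop := is_pullback f f k1 k2.

Definition is_coequalizer {C : Category} {A B Q : C}
  (f g : Hom A B) (q : Hom B Q) : Prop :=
  q ∘ f = q ∘ g /\
  forall (Z : C) (z : Hom B Z), z ∘ f = z ∘ g -> exists! u : Hom Q Z, u ∘ q = z.

Definition is_regular_epi {C : Category} {B Q : C} (q : Hom B Q) : Prop :=
  exists (A : C) (f g : Hom A B), is_coequalizer f g q.

Definition is_coproduct {C : Category} {A B S : C}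
  (i1 : Hom A S) (i2 : Hom B S) : Prop :=
  forall (Z : C) (a : Hom A Z) (b : Hom B Z),
    exists! u : Hom S Z, u ∘ i1 = a /\ u ∘ i2 = b.

Definition is_kernel {C : Category} {K A B : C} (k : Hom K A) (f : Hom A B) : Prop :=
  is_zero (f ∘ k) /\
  forall (Z : C) (z : Hom Z A), is_zero (f ∘ z) -> exists! u : Hom Z K, k ∘ u = z.

Definition is_cokernel {C : Category} {X A Q : C} (x : Hom X A) (c : Hom A Q) : Prop :=
  is_zero (c ∘ x) /\
  forall (Z : C) (z : Hom A Z), is_zero (z ∘ x) -> exists! u : Hom Q Z, u ∘ c = z.

Definition is_normal_mono {C : Category} {K A : C} (k : Hom K A) : Prop :=
  exists (B : C) (f : Hom A B), is_kernel k f.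

Definition is_pointed (C : Category) : Prop := exists Z : C, is_zero_object Z.

Definition finitely_complete (C : Category) : Prop :=
  (exists T : C, is_terminal T) /\
  (forall (A B D : C) (f : Hom A D) (g : Hom B D),
     exists (P : C) (p1 : Hom P A) (p2 : Hom P B), is_pullback f g p1 p2).

Definition is_regular (C : Category) : Prop :=
  finitely_complete C /\
  (forall (A B K : C) (f : Hom A B) (k1 k2 : Hom K A),
     is_kernel_pair f k1 k2 -> exists (Q : C) (q : Hom A Q), is_coequalizer k1 k2 q) /\
  (forall (A B D P : C) (f : Hom A D) (g : Hom B D) (p1 : Hom P A) (p2 : Hom P B),
     is_pullback f g p1 p2 -> is_regular_epi g -> is_regular_epi p1).

Definition split_short_five_lemma (C : Category) : Prop :=
  forall (K A B K' A' B' : C)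
    (k : Hom K A) (p : Hom A B) (s : Hom B A)
    (k' : Hom K' A') (p' : Hom A' B') (s' : Hom B' A')
    (u : Hom K K') (v : Hom A A') (w : Hom B B'),
    p ∘ s = idm B -> p' ∘ s' = idm B' ->
    is_kernel k p -> is_kernel k' p' ->
    v ∘ k = k' ∘ u -> p' ∘ v = w ∘ p -> v ∘ s = s' ∘ w ->
    is_iso u -> is_iso w -> is_iso v.

Definition is_homological (C : Category) : Prop :=
  is_pointed C /\ is_regular C /\ split_short_five_lemma C.

Definition has_finite_colimits (C : Category) : Prop :=
  (exists I : C, is_initial I) /\
  (forall A B : C, exists (S : C) (i1 : Hom A S) (i2 : Hom B S), is_coproduct i1 i2) /\
  (forall (A B : C) (f g : Hom A B), exists (Q : C) (q : Hom B Q), is_coequalizer f g q).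

Definition image_is_normal_mono {C : Category} {X A : C} (x : Hom X A) : Prop :=
  exists (I : C) (e : Hom X I) (i : Hom I A),
    x = i ∘ e /\ is_regular_epi e /\ is_mono i /\ is_normal_mono i.

Definition is_A3_limit {C : Category} {A QX QY A3 : C}
  (cx : Hom A QX) (cy : Hom A QY) (q1 q2 q3 : Hom A3 A) : Prop :=
  cx ∘ q1 = cx ∘ q2 /\ cy ∘ q2 = cy ∘ q3 /\
  forall (Z : C) (z1 z2 z3 : Hom Z A), cx ∘ z1 = cx ∘ z2 -> cy ∘ z2 = cy ∘ z3 ->
    exists! u : Hom Z A3, q1 ∘ u = z1 /\ q2 ∘ u = z2 /\ q3 ∘ u = z3.

(* Internal multiplication X x Y -> A over (A, 1_A).
   iX1, iX2 : coproduct injections of A+X; rX = [1,0], sX = [1,x] : A+X -> A;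
   likewise for Y; (P, pi1, pi2) = (A+X) x_A (A+Y).
   A morphism u with pi1 u = 1, pi2 u = iY1 rX is the pairing <1, iota_1 [1,0]>. *)
Definition is_internal_multiplication {C : Category} {A AX AY P : C}
  (iX1 : Hom A AX) (iY1 : Hom A AY)
  (rX sX : Hom AX A) (rY sY : Hom AY A)
  (pi1 : Hom P AX) (pi2 : Hom P AY) (m : Hom P A) : Prop :=
  (forall u : Hom AX P, pi1 ∘ u = idm AX -> pi2 ∘ u = iY1 ∘ rX -> m ∘ u = sX) /\
  (forall u : Hom AY P, pi1 ∘ u = iX1 ∘ rY -> pi2 ∘ u = idm AY -> m ∘ u = sY).

(* p : A3 -> A is an internal pregroupoid structure on A/X <- A -> A/Y:
   p <pi1,pi2,pi2> = pi1 on A x_{A/X} A and p <pi1,pi1,pi2> = pi2 on A x_{A/Y} A. *)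
Definition is_internal_pregroupoid {C : Category} {A QX QY A3 : C}
  (cx : Hom A QX) (cy : Hom A QY) (q1 q2 q3 : Hom A3 A) (p : Hom A3 A) : Prop :=
  (forall (K : C) (k1 k2 : Hom K A), is_kernel_pair cx k1 k2 ->
     forall h : Hom K A3, q1 ∘ h = k1 -> q2 ∘ h = k2 -> q3 ∘ h = k2 -> p ∘ h = k1) /\
  (forall (K : C) (k1 k2 : Hom K A), is_kernel_pair cy k1 k2 ->
     forall h : Hom K A3, q1 ∘ h = k1 -> q2 ∘ h = k1 -> q3 ∘ h = k2 -> p ∘ h = k2).


(* In a homological category the kernel pair K of c : A -> A/X is jointly
   strongly epic on two pieces: its diagonal A -> K, and the normal image of x,
   which is the kernel of the split epi pi2 : K -> A (split short five lemma).
   So p <pi1,pi2,pi2> = pi1 may be tested on these two pieces.  Both factor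
   through t := gamma_1 <1, iota_1 [1,0]> : A+X -> A3, at which p equals
   m <1, iota_1 [1,0]> = [1,x]; evaluating at iota_1 and iota_2 gives the law.
   The second law is the first one for the mirrored data (Y, A/Y, q3, q2, q1). *)

Lemma hom_to_zero_object_unique {C : Category} (Z : C) (HZ : is_zero_object Z)
  (B : C) (f g : Hom B Z) : f = g.
Proof. destruct HZ as [_ HT]. destruct (HT B) as [t Ht]. rewrite (Ht f), (Ht g). reflexivity. Qed.

Lemma hom_from_zero_object_unique {C : Category} (Z : C) (HZ : is_zero_object Z)
  (B : C) (f g : Hom Z B) : f = g.
Proof. destruct HZ as [HI _]. destruct (HI B) as [t Ht]. rewrite (Ht f), (Ht g). reflexivity. Qed.

Lemma is_zero_unique {C : Category} {A B : C} (f g : Hom A B) :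
  is_zero f -> is_zero g -> f = g.
Proof.
  intros [Z [a [b [HZ ->]]]] [Z' [a' [b' [HZ' ->]]]].
  destruct (proj1 HZ Z') as [t _].
  assert (Ea : t ∘ a = a') by apply (hom_to_zero_object_unique Z' HZ').
  assert (Eb : b = b' ∘ t) by apply (hom_from_zero_object_unique Z HZ).
  rewrite Eb, <- comp_assoc, Ea. reflexivity.
Qed.

Lemma is_zero_postcomp {C : Category} {A B D : C} (g : Hom B D) (f : Hom A B) :
  is_zero f -> is_zero (g ∘ f).
Proof. intros [Z [a [b [HZ ->]]]]. exists Z, a, (g ∘ b). split; [exact HZ | apply comp_assoc]. Qed.

Lemma is_zero_precomp {C : Category} {A B D : C} (g : Hom B D) (f : Hom A B) :
  is_zero g -> is_zero (g ∘ f).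
Proof.
  intros [Z [a [b [HZ ->]]]]. exists Z, (a ∘ f), b.
  split; [exact HZ | symmetry; apply comp_assoc].
Qed.

Lemma zero_hom_exists {C : Category} (HP : is_pointed C) (A B : C) :
  exists f : Hom A B, is_zero f.
Proof.
  destruct HP as [Z HZ]. destruct (proj2 HZ A) as [a _], (proj1 HZ B) as [b _].
  exists (b ∘ a), Z, a, b. split; [exact HZ | reflexivity].
Qed.

Definition is_epi {C : Category} {A B : C} (f : Hom A B) : Prop :=
  forall (Z : C) (g h : Hom B Z), g ∘ f = h ∘ f -> g = h.

Lemma regular_epi_is_epi {C : Category} {B Q : C} (q : Hom B Q) :
  is_regular_epi q -> is_epi q.
Proof.
  intros [A [f [g [Hq Huniv]]]] Z u v E.
  destruct (Huniv Z (u ∘ q)) as [w [_ Hw]].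
  { rewrite <- !comp_assoc, Hq. reflexivity. }
  transitivity w; [symmetry; apply Hw; reflexivity | apply Hw; symmetry; exact E].
Qed.

Lemma is_zero_cancel_epi {C : Category} (HP : is_pointed C) {X I B : C}
  (e : Hom X I) (f : Hom I B) : is_epi e -> is_zero (f ∘ e) -> is_zero f.
Proof.
  intros He Hfe. destruct (zero_hom_exists HP I B) as [z Hz].
  replace f with z; [exact Hz|].
  apply He, is_zero_unique; [apply is_zero_precomp; exact Hz | exact Hfe].
Qed.

Lemma kernel_is_mono {C : Category} {K A B : C} (k : Hom K A) (f : Hom A B) :
  is_kernel k f -> is_mono k.
Proof.
  intros [Hfk Huniv] Z g h E.
  assert (Hz : is_zero (f ∘ (k ∘ g))) by (rewrite comp_assoc; apply is_zero_precomp; exact Hfk).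
  destruct (Huniv Z _ Hz) as [u [_ Hu]].
  transitivity u; [symmetry|]; apply Hu; [reflexivity | symmetry; exact E].
Qed.

Lemma coproduct_hom_ext {C : Category} {A B S Z : C} (i1 : Hom A S) (i2 : Hom B S)
  (H : is_coproduct i1 i2) (u v : Hom S Z) : u ∘ i1 = v ∘ i1 -> u ∘ i2 = v ∘ i2 -> u = v.
Proof.
  intros E1 E2. destruct (H Z (u ∘ i1) (u ∘ i2)) as [w [_ Hw]].
  transitivity w; [symmetry|]; apply Hw; split; auto.
Qed.

Definition is_product {C : Category} {A B P : C} (a : Hom P A) (b : Hom P B) : Prop :=
  forall (Z : C) (z1 : Hom Z A) (z2 : Hom Z B), exists! u : Hom Z P, a ∘ u = z1 /\ b ∘ u = z2.

Lemma product_hom_ext {C : Category} {A B P Z : C} (a : Hom P A) (b : Hom P B)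
  (H : is_product a b) (u v : Hom Z P) : a ∘ u = a ∘ v -> b ∘ u = b ∘ v -> u = v.
Proof.
  intros E1 E2. destruct (H Z (a ∘ u) (b ∘ u)) as [w [_ Hw]].
  transitivity w; [symmetry|]; apply Hw; split; auto.
Qed.

Lemma product_exists {C : Category} (HF : finitely_complete C) (A B : C) :
  exists (P : C) (a : Hom P A) (b : Hom P B), is_product a b.
Proof.
  destruct HF as [[T HT] Hpb].
  destruct (HT A) as [tA HtA], (HT B) as [tB HtB].
  destruct (Hpb _ _ _ tA tB) as [P [a [b [_ Huniv]]]].
  exists P, a, b. intros Z z1 z2.
  apply Huniv. destruct (HT Z) as [tZ HtZ].
  transitivity tZ; [|symmetry]; apply HtZ.
Qed.

Definition is_equalizer {C : Category} {E K B : C} (e : Hom E K) (f g : Hom K B) : Prop :=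
  f ∘ e = g ∘ e /\
  forall (Z : C) (z : Hom Z K), f ∘ z = g ∘ z -> exists! u : Hom Z E, e ∘ u = z.

Lemma equalizer_is_mono {C : Category} {E K B : C} (e : Hom E K) (f g : Hom K B) :
  is_equalizer e f g -> is_mono e.
Proof.
  intros [Hfg Huniv] Z u v Heq.
  assert (Hz : f ∘ (e ∘ u) = g ∘ (e ∘ u)) by (rewrite !comp_assoc, Hfg; reflexivity).
  destruct (Huniv Z _ Hz) as [w [_ Hw]].
  transitivity w; [symmetry|]; apply Hw; [reflexivity | symmetry; exact Heq].
Qed.

(* The equalizer of f and g is the pullback of <1,f> and <1,g>. *)
Lemma equalizer_exists {C : Category} (HF : finitely_complete C) {K B : C} (f g : Hom K B) :
  exists (E : C) (e : Hom E K), is_equalizer e f g.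
Proof.
  destruct (product_exists HF K B) as [P [a [b Hprod]]].
  destruct (Hprod K (idm K) f) as [sf [[Hsf1 Hsf2] _]].
  destruct (Hprod K (idm K) g) as [sg [[Hsg1 Hsg2] _]].
  destruct (proj2 HF _ _ _ sf sg) as [E [e1 [e2 [He Huniv]]]].
  assert (e1 = e2) as <-.
  { assert (H : a ∘ (sf ∘ e1) = a ∘ (sg ∘ e2)) by (rewrite He; reflexivity).
    rewrite !comp_assoc, Hsf1, Hsg1, !comp_id_l in H. exact H. }
  exists E, e1. split.
  - assert (H : b ∘ (sf ∘ e1) = b ∘ (sg ∘ e1)) by (rewrite He; reflexivity).
    rewrite !comp_assoc, Hsf2, Hsg2 in H. exact H.
  - intros Z z Hz.
    assert (Hs : sf ∘ z = sg ∘ z).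
    { apply (product_hom_ext a b Hprod); rewrite !comp_assoc.
      - rewrite Hsf1, Hsg1. reflexivity.
      - rewrite Hsf2, Hsg2. exact Hz. }
    destruct (Huniv Z z z Hs) as [u [[U1 _] Hu]].
    exists u. split; [exact U1|].
    intros v Hv. apply Hu. split; exact Hv.
Qed.

Lemma kernel_of_mono_factor {C : Category} {I E K A : C}
  (e : Hom E K) (k : Hom I E) (kap : Hom I K) (r : Hom K A) :
  is_mono e -> e ∘ k = kap -> is_kernel kap r -> is_kernel k (r ∘ e).
Proof.
  intros He Hk [Hrk Huniv]. split.
  - rewrite <- comp_assoc, Hk. exact Hrk.
  - intros Z z Hz. rewrite <- comp_assoc in Hz.
    destruct (Huniv Z (e ∘ z) Hz) as [w [Hw Hwu]].
    exists w. split.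
    + apply He. rewrite comp_assoc, Hk. exact Hw.
    + intros w' Hw'. apply Hwu. rewrite <- Hk, <- comp_assoc, Hw'. reflexivity.
Qed.

(* The equalizer of f and g contains the section d and the kernel kap of r, so
   the split short five lemma makes it an isomorphism. *)
Lemma split_kernel_jointly_epic {C : Category} (HF : finitely_complete C)
  (HS : split_short_five_lemma C) {I K A B : C}
  (kap : Hom I K) (r : Hom K A) (d : Hom A K) (f g : Hom K B) :
  r ∘ d = idm A -> is_kernel kap r -> f ∘ d = g ∘ d -> f ∘ kap = g ∘ kap -> f = g.
Proof.
  intros Hrd Hkap Hd Hk.
  destruct (equalizer_exists HF f g) as [E [e He]].
  destruct (proj2 He _ d Hd) as [d' [Hd' _]].
  destruct (proj2 He _ kap Hk) as [k' [Hk' _]].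
  assert (Hiso : is_iso e).
  { apply (HS I E A I K A k' (r ∘ e) d' kap r d (idm I) e (idm A)).
    - rewrite <- comp_assoc, Hd'. exact Hrd.
    - exact Hrd.
    - exact (kernel_of_mono_factor e k' kap r (equalizer_is_mono e f g He) Hk' Hkap).
    - exact Hkap.
    - rewrite comp_id_r. exact Hk'.
    - rewrite comp_id_l. reflexivity.
    - rewrite comp_id_r. exact Hd'.
    - exists (idm I); split; apply comp_id_l.
    - exists (idm A); split; apply comp_id_l. }
  destruct Hiso as [e' [_ He']].
  rewrite <- (comp_id_r f), <- (comp_id_r g), <- He', !comp_assoc, (proj1 He). reflexivity.
Qed.

Lemma normal_image_is_kernel_of_cokernel {C : Category} (HP : is_pointed C)
  {X A Q : C} (x : Hom X A) (c : Hom A Q) :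
  is_cokernel x c -> image_is_normal_mono x ->
  exists (I : C) (e : Hom X I) (i : Hom I A), x = i ∘ e /\ is_epi e /\ is_kernel i c.
Proof.
  intros Hc [I [e [i [Hxe [Hre [Hmono [B [f Hf]]]]]]]].
  assert (He : is_epi e) by (apply regular_epi_is_epi; exact Hre).
  exists I, e, i. split; [exact Hxe | split; [exact He | split]].
  - apply (is_zero_cancel_epi HP e _ He). rewrite <- comp_assoc, <- Hxe. exact (proj1 Hc).
  - intros Z z Hz.
    assert (Hfx : is_zero (f ∘ x)).
    { rewrite Hxe, comp_assoc. apply is_zero_precomp. exact (proj1 Hf). }
    destruct (proj2 Hc _ f Hfx) as [f' [Hf' _]].
    assert (Hfz : is_zero (f ∘ z)).
    { rewrite <- Hf', <- comp_assoc. apply is_zero_postcomp. exact Hz. }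
    destruct (proj2 Hf _ z Hfz) as [u [Hu _]].
    exists u. split; [exact Hu|].
    intros u' Hu'. apply Hmono. rewrite Hu, Hu'. reflexivity.
Qed.

Lemma kernel_pair_kernel {C : Category} {I K A Q : C} (c : Hom A Q) (k1 k2 : Hom K A)
  (i : Hom I A) (kap : Hom I K) :
  is_kernel_pair c k1 k2 -> is_kernel i c -> k1 ∘ kap = i -> is_zero (k2 ∘ kap) ->
  is_kernel kap k2.
Proof.
  intros [Hc Hpb] Hi Hk1 Hk2. split; [exact Hk2|].
  intros Z z Hz.
  assert (Hcz : is_zero (c ∘ (k1 ∘ z))).
  { rewrite comp_assoc, Hc, <- comp_assoc. apply is_zero_postcomp. exact Hz. }
  destruct (proj2 Hi _ _ Hcz) as [u [Hu _]].
  exists u. split.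
  - assert (Hcz' : c ∘ (k1 ∘ z) = c ∘ (k2 ∘ z)) by (rewrite !comp_assoc, Hc; reflexivity).
    destruct (Hpb _ _ _ Hcz') as [v [_ Hv]].
    transitivity v; [symmetry|]; apply Hv; split; try reflexivity.
    + rewrite comp_assoc, Hk1. exact Hu.
    + rewrite comp_assoc. apply is_zero_unique; [apply is_zero_precomp; exact Hk2 | exact Hz].
  - intros u' Hu'. apply (kernel_is_mono i c Hi).
    rewrite Hu, <- Hk1, <- comp_assoc, Hu'. reflexivity.
Qed.

Lemma kernel_pair_sym {C : Category} {A B K : C} (f : Hom A B) (k1 k2 : Hom K A) :
  is_kernel_pair f k1 k2 -> is_kernel_pair f k2 k1.
Proof.
  intros [E Huniv]. split; [symmetry; exact E|].
  intros Z z1 z2 Hz. destruct (Huniv Z z2 z1 (eq_sym Hz)) as [w [[W1 W2] Hw]].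
  exists w. split; [split; assumption|]. intros w' [A1 A2]. apply Hw; split; assumption.
Qed.

Lemma cokernel_kernel_pair_hom_ext {C : Category} (HC : is_homological C)
  {X A Q K B : C} (x : Hom X A) (c : Hom A Q) (k1 k2 : Hom K A) (f g : Hom K B) :
  is_cokernel x c -> image_is_normal_mono x -> is_kernel_pair c k1 k2 ->
  (forall d : Hom A K, k1 ∘ d = idm A -> k2 ∘ d = idm A -> f ∘ d = g ∘ d) ->
  (forall w : Hom X K, k1 ∘ w = x -> is_zero (k2 ∘ w) -> f ∘ w = g ∘ w) ->
  f = g.
Proof.
  intros Hc Hx Hkp Hdiag Hx0.
  destruct HC as [HP [[HF _] HS]].
  destruct (normal_image_is_kernel_of_cokernel HP x c Hc Hx) as [I [e [i [Hxe [He Hi]]]]].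
  destruct (zero_hom_exists HP I A) as [z Hz].
  assert (Hciz : c ∘ i = c ∘ z).
  { apply is_zero_unique; [exact (proj1 Hi) | apply is_zero_postcomp; exact Hz]. }
  destruct (proj2 Hkp _ i z Hciz) as [kap [[Hk1 Hk2] _]].
  destruct (proj2 Hkp _ (idm A) (idm A) eq_refl) as [d [[Hd1 Hd2] _]].
  apply (split_kernel_jointly_epic HF HS kap k2 d f g Hd2).
  - apply (kernel_pair_kernel c k1 k2 i kap Hkp Hi Hk1). rewrite Hk2. exact Hz.
  - apply Hdiag; assumption.
  - apply He. rewrite <- !comp_assoc. apply Hx0.
    + rewrite comp_assoc, Hk1. symmetry. exact Hxe.
    + rewrite comp_assoc, Hk2. apply is_zero_precomp. exact Hz.
Qed.

Lemma A3_limit_hom_ext {C : Category} {A QX QY A3 Z : C} (cx : Hom A QX) (cy : Hom A QY)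
  (q1 q2 q3 : Hom A3 A) (a b : Hom Z A3) :
  is_A3_limit cx cy q1 q2 q3 ->
  q1 ∘ a = q1 ∘ b -> q2 ∘ a = q2 ∘ b -> q3 ∘ a = q3 ∘ b -> a = b.
Proof.
  intros [F1 [F2 Huniv]] E1 E2 E3.
  destruct (Huniv Z (q1 ∘ a) (q2 ∘ a) (q3 ∘ a)) as [w [_ Hw]].
  - rewrite !comp_assoc, F1. reflexivity.
  - rewrite !comp_assoc, F2. reflexivity.
  - transitivity w; [symmetry|]; apply Hw; auto.
Qed.

Lemma A3_limit_rev {C : Category} {A QX QY A3 : C} (cx : Hom A QX) (cy : Hom A QY)
  (q1 q2 q3 : Hom A3 A) :
  is_A3_limit cx cy q1 q2 q3 -> is_A3_limit cy cx q3 q2 q1.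
Proof.
  intros [F1 [F2 Huniv]]. split; [symmetry; exact F2 | split; [symmetry; exact F1|]].
  intros Z z3 z2 z1 E32 E21.
  destruct (Huniv Z z1 z2 z3 (eq_sym E21) (eq_sym E32)) as [u [[U1 [U2 U3]] Hu]].
  exists u. split; [auto|].
  intros v [V3 [V2 V1]]. apply Hu. auto.
Qed.

Lemma cokernel_comp_copair {C : Category} {X A AX Q : C} (x : Hom X A) (c : Hom A Q)
  (i1 : Hom A AX) (i2 : Hom X AX) (r s : Hom AX A) :
  is_coproduct i1 i2 -> is_zero (c ∘ x) ->
  r ∘ i1 = idm A -> is_zero (r ∘ i2) -> s ∘ i1 = idm A -> s ∘ i2 = x ->
  c ∘ s = c ∘ r.
Proof.
  intros Hcop Hcx Hr1 Hr2 Hs1 Hs2. apply (coproduct_hom_ext i1 i2 Hcop); rewrite <- !comp_assoc.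
  - rewrite Hs1, Hr1. reflexivity.
  - rewrite Hs2. apply is_zero_unique; [exact Hcx | apply is_zero_postcomp; exact Hr2].
Qed.

Lemma gamma1_restriction {C : Category} {A AX AY P A3 : C}
  (q1 q2 q3 : Hom A3 A) (g : Hom P A3) (pi1 : Hom P AX) (pi2 : Hom P AY)
  (rX sX : Hom AX A) (sY : Hom AY A) (iY1 : Hom A AY) (u : Hom AX P) :
  q1 ∘ g = sX ∘ pi1 -> q2 ∘ g = rX ∘ pi1 -> q3 ∘ g = sY ∘ pi2 ->
  pi1 ∘ u = idm AX -> pi2 ∘ u = iY1 ∘ rX -> sY ∘ iY1 = idm A ->
  q1 ∘ (g ∘ u) = sX /\ q2 ∘ (g ∘ u) = rX /\ q3 ∘ (g ∘ u) = rX.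
Proof.
  intros G1 G2 G3 U1 U2 HsY1. rewrite !comp_assoc, G1, G2, G3, <- !comp_assoc, U1, U2.
  rewrite comp_assoc, HsY1, !comp_id_l, !comp_id_r. auto.
Qed.

(* t is gamma_1 <1, iota_1 [1,0]>, i.e. gamma_1 restricted to A+X. *)
Lemma pregroupoid_left_law {C : Category} (HC : is_homological C)
  {X A AX QX QY A3 : C} (x : Hom X A) (iX1 : Hom A AX) (iX2 : Hom X AX) (rX sX : Hom AX A)
  (cx : Hom A QX) (cy : Hom A QY) (q1 q2 q3 : Hom A3 A) (p : Hom A3 A) (t : Hom AX A3) :
  image_is_normal_mono x -> is_cokernel x cx -> is_A3_limit cx cy q1 q2 q3 ->
  rX ∘ iX1 = idm A -> is_zero (rX ∘ iX2) -> sX ∘ iX1 = idm A -> sX ∘ iX2 = x ->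
  q1 ∘ t = sX -> q2 ∘ t = rX -> q3 ∘ t = rX -> p ∘ t = sX ->
  forall (K : C) (k1 k2 : Hom K A), is_kernel_pair cx k1 k2 ->
  forall h : Hom K A3, q1 ∘ h = k1 -> q2 ∘ h = k2 -> q3 ∘ h = k2 -> p ∘ h = k1.
Proof.
  intros Hx Hcx HA3 HrX1 HrX2 HsX1 HsX2 T1 T2 T3 Tp K k1 k2 Hkp h E1 E2 E3.
  apply (cokernel_kernel_pair_hom_ext HC x cx k1 k2 (p ∘ h) k1 Hcx Hx Hkp).
  - intros d D1 D2.
    assert (Hhd : h ∘ d = t ∘ iX1).
    { apply (A3_limit_hom_ext cx cy q1 q2 q3 _ _ HA3); rewrite !comp_assoc.
      - rewrite E1, T1, D1, HsX1. reflexivity.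
      - rewrite E2, T2, D2, HrX1. reflexivity.
      - rewrite E3, T3, D2, HrX1. reflexivity. }
    rewrite <- comp_assoc, Hhd, comp_assoc, Tp, HsX1, D1. reflexivity.
  - intros w W1 W2.
    assert (Hhw : h ∘ w = t ∘ iX2).
    { apply (A3_limit_hom_ext cx cy q1 q2 q3 _ _ HA3); rewrite !comp_assoc.
      - rewrite E1, T1, W1, HsX2. reflexivity.
      - rewrite E2, T2. apply is_zero_unique; assumption.
      - rewrite E3, T3. apply is_zero_unique; assumption. }
    rewrite <- comp_assoc, Hhw, comp_assoc, Tp, HsX2, W1. reflexivity.
Qed.

Theorem lemma1p7 (C : Category)
  (HC : is_homological C) (HCol : has_finite_colimits C)
  (A X Y : C) (x : Hom X A) (y : Hom Y A)
  (Hx : image_is_normal_mono x) (Hy : image_is_normal_mono y)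
  (* coproducts A+X, A+Y *)
  (AX : C) (iX1 : Hom A AX) (iX2 : Hom X AX) (HAX : is_coproduct iX1 iX2)
  (AY : C) (iY1 : Hom A AY) (iY2 : Hom Y AY) (HAY : is_coproduct iY1 iY2)
  (* rX = [1,0], sX = [1,x], rY = [1,0], sY = [1,y] *)
  (rX : Hom AX A) (HrX1 : rX ∘ iX1 = idm A) (HrX2 : is_zero (rX ∘ iX2))
  (sX : Hom AX A) (HsX1 : sX ∘ iX1 = idm A) (HsX2 : sX ∘ iX2 = x)
  (rY : Hom AY A) (HrY1 : rY ∘ iY1 = idm A) (HrY2 : is_zero (rY ∘ iY2))
  (sY : Hom AY A) (HsY1 : sY ∘ iY1 = idm A) (HsY2 : sY ∘ iY2 = y)
  (* (A+X) x_A (A+Y) *)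
  (P : C) (pi1 : Hom P AX) (pi2 : Hom P AY) (HP : is_pullback rX rY pi1 pi2)
  (m : Hom P A) (Hm : is_internal_multiplication iX1 iY1 rX sX rY sY pi1 pi2 m)
  (* cokernels A -> A/X, A -> A/Y *)
  (QX : C) (cx : Hom A QX) (Hcx : is_cokernel x cx)
  (QY : C) (cy : Hom A QY) (Hcy : is_cokernel y cy)
  (* A3 *)
  (A3 : C) (q1 q2 q3 : Hom A3 A) (HA3 : is_A3_limit cx cy q1 q2 q3)
  (p : Hom A3 A)
  (* p gamma_1 = m, gamma_1 = <[1,x] pi1, [1,0] pi1, [1,y] pi2> *)
  (Hp : forall g : Hom P A3,
          q1 ∘ g = sX ∘ pi1 -> q2 ∘ g = rX ∘ pi1 -> q3 ∘ g = sY ∘ pi2 -> p ∘ g = m) :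
  is_internal_pregroupoid cx cy q1 q2 q3 p.
Proof.
  (* All colimits involved are given explicitly. *)
  destruct HP as [HPc HPu].
  pose proof (cokernel_comp_copair x cx iX1 iX2 rX sX HAX (proj1 Hcx) HrX1 HrX2 HsX1 HsX2) as HcxX.
  pose proof (cokernel_comp_copair y cy iY1 iY2 rY sY HAY (proj1 Hcy) HrY1 HrY2 HsY1 HsY2) as HcyY.
  assert (H12 : cx ∘ (sX ∘ pi1) = cx ∘ (rX ∘ pi1)) by (rewrite !comp_assoc, HcxX; reflexivity).
  assert (H23 : cy ∘ (rX ∘ pi1) = cy ∘ (sY ∘ pi2)) by (rewrite HPc, !comp_assoc, HcyY; reflexivity).
  destruct (proj2 (proj2 HA3) P _ _ _ H12 H23) as [g [[G1 [G2 G3]] _]].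
  assert (G2' : q2 ∘ g = rY ∘ pi2) by (rewrite G2; exact HPc).
  assert (HuX : rX ∘ idm AX = rY ∘ (iY1 ∘ rX)) by (rewrite comp_id_r, comp_assoc, HrY1, comp_id_l; reflexivity).
  assert (HuY : rX ∘ (iX1 ∘ rY) = rY ∘ idm AY) by (rewrite comp_id_r, comp_assoc, HrX1, comp_id_l; reflexivity).
  destruct (HPu AX _ _ HuX) as [u [[U1 U2] _]].
  destruct (HPu AY _ _ HuY) as [u' [[U1' U2'] _]].
  assert (Tp : p ∘ (g ∘ u) = sX) by (rewrite comp_assoc, (Hp g G1 G2 G3); exact (proj1 Hm u U1 U2)).
  assert (Tp' : p ∘ (g ∘ u') = sY) by (rewrite comp_assoc, (Hp g G1 G2 G3); exact (proj2 Hm u' U1' U2')).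
  destruct (gamma1_restriction q1 q2 q3 g pi1 pi2 rX sX sY iY1 u G1 G2 G3 U1 U2 HsY1) as [T1 [T2 T3]].
  destruct (gamma1_restriction q3 q2 q1 g pi2 pi1 rY sY sX iX1 u' G3 G2' G1 U2' U1' HsX1)
    as [T3' [T2' T1']].
  split.
  - exact (pregroupoid_left_law HC x iX1 iX2 rX sX cx cy q1 q2 q3 p _
             Hx Hcx HA3 HrX1 HrX2 HsX1 HsX2 T1 T2 T3 Tp).
  - intros K k1 k2 Hkp h E1 E2 E3.
    exact (pregroupoid_left_law HC y iY1 iY2 rY sY cy cx q3 q2 q1 p _
             Hy Hcy (A3_limit_rev cx cy q1 q2 q3 HA3) HrY1 HrY2 HsY1 HsY2 T3' T2' T1' Tp'
             K k2 k1 (kernel_pair_sym cy k1 k2 Hkp) h E3 E2 E1).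
Qed.
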